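(* Let $q$ be a prime power, $n\ge2$, and let $\mathrm{M}=\{(m_{i,j})\in\mathrm{H}_n(q^2): m_{i,i}=0 \text{ for all } 1\le i\le n\}$ be the additive $2$-code of Hermitian matrices with zero main diagonal. Then $\mathrm{M}$ is not a $t$-design for any $t$ with $1\le t\le n$.
   Context: For $a\in\mathbb{F}_{q^2}$ write $\bar a=a^q$; $A^*$ is the conjugate transpose; $\mathrm{H}_n(q^2)=\{A\in\mathbb{F}_{q^2}^{n\times n}:A^*=A\}$. Designs: fix a nontrivial character $\chi$ of $(\mathbb{F}_q,+)$, $\langle A,B\rangle=\chi(\mathrm{tr}(A^*B))$; $\mathrm{H}_k$ is the set of rank-$k$ matrices in $\mathrm{H}_n(q^2)$; $Q_k(i)=\sum_{A\in\mathrm{H}_k}\langle A,B\rangle$ for $B\in\mathrm{H}_i$; for $\mathrm{C}\subseteq\mathrm{H}_n(q^2)$ the inner distribution is $A_i=|\{(X,Y)\in\mathrm{C}^2:\mathrm{rk}(X-Y)=i\}|/|\mathrm{C}|$ and the dual inner distribution is $A'_k=\sum_iQ_k(i)A_i$; $\mathrm{C}$ is a $t$-design if $A'_1=\dots=A'_t=0$. *)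

From HB Require Import structures.
From mathcomp Require Import all_boot all_order all_algebra all_field.
Set Implicit Arguments. Unset Strict Implicit. Unset Printing Implicit Defensive.
Import Order.TTheory GRing.Theory Num.Theory.
Local Open Scope ring_scope.

Section Herm.
Variables (q : nat) (F : finFieldType).

(* conjugation a |-> a^q on F_{q^2} *)
Definition conjq (a : F) : F := a ^+ q.

Definition mxstar n (A : 'M[F]_n) : 'M[F]_n := (map_mx conjq A)^T.

Definition hermitian n (A : 'M[F]_n) : bool := mxstar A == A.

Definition herm_rank n (k : nat) : {set 'M[F]_n} :=
  [set A : 'M[F]_n | hermitian A & \rank A == k].

Definition pairing (chi : F -> algC) n (A B : 'M[F]_n) : algC :=
  chi (\tr (mxstar A *m B)).

Definition Qk (chi : F -> algC) n (k i : nat) : algC :=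
  \sum_(A in herm_rank n k) pairing chi A (pid_mx i).

Definition inner_dist n (C : {set 'M[F]_n}) (i : nat) : algC :=
  #|[set XY in setX C C | \rank (XY.1 - XY.2) == i]|%:R / #|C|%:R.

Definition dual_inner_dist (chi : F -> algC) n (C : {set 'M[F]_n}) (k : nat)
  : algC := \sum_(i < n.+1) Qk chi n k i * inner_dist C i.

Definition is_design (chi : F -> algC) n (C : {set 'M[F]_n}) (t : nat) : Prop :=
  forall k : nat, (1 <= k <= t)%N -> dual_inner_dist chi C k = 0.

Definition zero_diag_herm n : {set 'M[F]_n} :=
  [set A : 'M[F]_n | hermitian A & [forall i, A i i == 0]].

(* chi is a nontrivial character of (F_q,+), where F_q = {a | a^q = a} *)
Definition nontrivial_additive_char (chi : F -> algC) : Prop :=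
  [/\ chi 0 = 1,
      (forall a b : F, a ^+ q = a -> b ^+ q = b -> chi (a + b) = chi a * chi b)
    & exists a : F, a ^+ q = a /\ chi a != 1].

End Herm.

(* Over F_(q^2) with the conjugation x |-> x ^+ q, every Hermitian matrix Z is
   congruent, Z |-> Q Z Q^*, to pid_mx (rank Z): the norm x * x ^+ q maps onto the
   fixed field F_q and the trace x + x ^+ q is not identically zero, so Gaussian
   elimination with pivots normalised to 1 goes through.  Hence
   sum_(A in H_k) <A, Z> = Q_k(rank Z) and |M| A'_k = sum_(A in H_k) sum_(X, Y in M)
   <A, X - Y>.  As M is an additive group, the inner sum is |M| times the sum over
   M of the character D |-> <A, D>, which is |M| when A is diagonal and 0 otherwise
   (an off-diagonal entry of A yields some D in M with <A, D> <> 1).  Therefore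
   A'_k = |M| * #{diagonal A in H_k}, which is positive for k <= n (take pid_mx k);
   already A'_1 <> 0 rules out every t >= 1. *)

From Pilot Require Import Defs.
From HB Require Import structures.
From mathcomp Require Import all_boot all_order all_algebra all_field perm cyclic zify.
Set Implicit Arguments. Unset Strict Implicit. Unset Printing Implicit Defensive.
Import Order.TTheory GRing.Theory Num.Theory.
Local Open Scope ring_scope.

Section SubgroupSums.
Variables (V : finZmodType) (S : {set V}).
Hypothesis S_zmod : zmod_closed S.

Let memSN x : x \in S -> - x \in S.
Proof. by case: S_zmod => S0 SB Sx; rewrite -sub0r SB. Qed.

Let memS_addr x y : y \in S -> (x + y \in S) = (x \in S).
Proof.
case: S_zmod => _ SB Sy; apply/idP/idP => [Sxy|Sx]; first by rewrite -(addrK y x) SB.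
by rewrite -[y]opprK SB ?memSN.
Qed.

Lemma sum_translate (R : nmodType) (f : V -> R) y : y \in S ->
  \sum_(x in S) f (x + y) = \sum_(x in S) f x.
Proof.
move=> Sy; rewrite [RHS](reindex (+%R^~ y)) /=; last first.
  by exists (fun x => x - y) => x _; rewrite ?addrK ?subrK.
by apply: eq_bigl => x; rewrite memS_addr.
Qed.

Lemma sum_setX_subr (R : nmodType) (f : V -> R) :
  \sum_(xy in setX S S) f (xy.1 - xy.2) = (\sum_(x in S) f x) *+ #|S|.
Proof.
have -> : \sum_(xy in setX S S) f (xy.1 - xy.2) = \sum_(x in S) \sum_(y in S) f (x - y).
  by rewrite pair_big_dep; apply: eq_bigl => -[x y]; rewrite in_setX.
by rewrite exchange_big -sumr_const; apply: eq_bigr => y /memSN/sum_translate->.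
Qed.

Lemma sum_mulmorph_eq0 (R : idomainType) (f : V -> R) y :
  {in S &, {morph f : x x' / x + x' >-> x * x'}} -> y \in S -> f y != 1 ->
  \sum_(x in S) f x = 0.
Proof.
move=> fD Sy fy_neq1.
have sum_fixed : \sum_(x in S) f x = f y * \sum_(x in S) f x.
  rewrite mulr_sumr -(sum_translate _ Sy).
  by apply: eq_bigr => x Sx; rewrite fD // mulrC.
have /eqP : (1 - f y) * \sum_(x in S) f x = 0.
  by rewrite mulrBl mul1r -sum_fixed subrr.
by rewrite mulf_eq0 subr_eq0 eq_sym (negbTE fy_neq1) => /eqP.
Qed.

End SubgroupSums.

Definition pFrobenius_pow (R : comNzRingType) q of [pchar R].-nat q :=
  fun x : R => x ^+ q.

Section FrobeniusPower.
Variables (R : comNzRingType) (q : nat) (qR : [pchar R].-nat q).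

Lemma pFrobenius_powE x : pFrobenius_pow qR x = x ^+ q. Proof. by []. Qed.

Fact pFrobenius_pow_is_nmod_morphism : nmod_morphism (pFrobenius_pow qR).
Proof.
split=> [|x y]; rewrite !pFrobenius_powE; last exact: exprDn_pchar.
by case/andP: qR => q_gt0 _; rewrite expr0n eqn0Ngt q_gt0.
Qed.

Fact pFrobenius_pow_is_monoid_morphism : monoid_morphism (pFrobenius_pow qR).
Proof. by split=> [|x y]; rewrite !pFrobenius_powE ?expr1n ?exprMn. Qed.

HB.instance Definition _ := GRing.isNmodMorphism.Build R R (pFrobenius_pow qR)
  pFrobenius_pow_is_nmod_morphism.
HB.instance Definition _ := GRing.isMonoidMorphism.Build R R (pFrobenius_pow qR)
  pFrobenius_pow_is_monoid_morphism.

End FrobeniusPower.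

Section FiniteField.
Variable F : finFieldType.

Lemma expf_card_pred (x : F) : x != 0 -> x ^+ #|F|.-1 = 1.
Proof.
move=> x_neq0; apply: (mulfI x_neq0).
by rewrite mulr1 -exprS prednK ?expf_card // ltnW ?finNzRing_gt1.
Qed.

Lemma finField_prim_root : exists z : F, (#|F|.-1).-primitive_root z.
Proof.
have N_gt0 : (0 < #|F|.-1)%N by rewrite -ltnS prednK ?finNzRing_gt1 // ltnW ?finNzRing_gt1.
have /hasP[z _ ?] : has (#|F|.-1).-primitive_root (enum [set~ (0 : F)]).
  apply: has_prim_root; rewrite ?enum_uniq -?cardE ?cardsC1 //.
  by apply/allP => x; rewrite mem_enum in_setC1 unity_rootE => /expf_card_pred->.
by exists z.
Qed.

Variable q : nat.
Hypothesis cardF : #|F| = (q ^ 2)%N.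

Let q_gt1 : (1 < q)%N.
Proof. by have := finNzRing_gt1 F; rewrite cardF; case: q => [|[]]. Qed.

Lemma sqrt_card_powK : involutive (fun x : F => x ^+ q).
Proof. by move=> x; rewrite -exprM mulnn -cardF expf_card. Qed.

Lemma sqrt_card_pow_neq_id : exists a : F, a ^+ q != a.
Proof.
have [a|fixedF] := pickP (fun a : F => a ^+ q != a); first by exists a.
pose p : {poly F} := 'X^q - 'X.
have size_p : size p = q.+1 by rewrite size_polyDl ?size_polyXn ?size_polyN ?size_polyX.
have p_neq0 : p != 0 by rewrite -size_poly_eq0 size_p.
have roots_p : all (root p) (enum F).
  by apply/allP => x _; rewrite rootE !hornerE (eqP (negbFE (fixedF x))) subrr.
have := max_poly_roots p_neq0 roots_p (enum_uniq F).
by rewrite size_p -cardE cardF -mulnn => ?; exfalso; nia.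
Qed.

Lemma sqrt_card_norm_onto (a : F) : a ^+ q = a -> exists s, s * s ^+ q = a.
Proof.
(* F^* is cyclic of order (q - 1)(q + 1) and a ^+ (q - 1) = 1, so the discrete
   logarithm of a is a multiple of q + 1. *)
have [-> _|a_neq0 a_fixed] := eqVneq a 0; first by exists 0; rewrite mul0r.
have [z z_prim] := finField_prim_root.
have card_pred : #|F|.-1 = (q.-1 * q.+1)%N by rewrite cardF; case: q q_gt1 => // q' _; nia.
have [[k _] /= a_eq] := prim_rootP z_prim (expf_card_pred a_neq0).
have a_unity : a ^+ q.-1 = 1.
  by apply: (mulfI a_neq0); rewrite -exprS prednK 1?ltnW // a_fixed mulr1.
have /dvdnP[m k_eq] : (q.+1 %| k)%N.
  have q1_gt0 : (0 < q.-1)%N by rewrite -ltnS prednK // ltnW.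
  rewrite -(dvdn_pmul2l q1_gt0) -card_pred (prim_order_dvd z_prim).
  by rewrite [(q.-1 * k)%N]mulnC exprM -a_eq a_unity.
by exists (z ^+ m); rewrite a_eq k_eq -exprM -exprD -mulnS.
Qed.

End FiniteField.

Local Open Scope sesquilinear_scope.

Lemma pid_mxS (R : nzRingType) m n r :
  pid_mx r.+1 = block_mx 1%:M 0 0 (pid_mx r) :> 'M[R]_(1 + m, 1 + n).
Proof.
apply/matrixP => i j.
rewrite -[i]splitK -[j]splitK; case: (split i) => i'; case: (split j) => j' /=.
- by rewrite block_mxEul !mxE !ord1.
- by rewrite block_mxEur !mxE !ord1.
- by rewrite block_mxEdl !mxE !ord1.
- by rewrite block_mxEdr !mxE /= eqSS ltnS.
Qed.

Lemma unitmx_lblock (R : comUnitRingType) n1 n2 (A : 'M[R]_n1) C (D : 'M[R]_n2) :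
  (block_mx A 0 C D \in unitmx) = (A \in unitmx) && (D \in unitmx).
Proof. by rewrite !unitmxE det_lblock unitrM. Qed.

Lemma mxtrace_mul_delta (R : pzSemiRingType) n (A : 'M[R]_n) i j :
  \tr (A *m delta_mx i j) = A j i.
Proof.
rewrite /mxtrace (bigD1 j) //= big1 ?addr0 => [|k /negbTE kj].
  rewrite mxE (bigD1 i) //= big1 ?addr0 => [|k /negbTE ki]; first by rewrite mxE !eqxx mulr1.
  by rewrite mxE ki mulr0.
by rewrite mxE big1 // => l _; rewrite mxE kj andbF mulr0.
Qed.

Lemma mxtrace_mul_diag (R : pzSemiRingType) n (A D : 'M[R]_n) :
  is_diag_mx A -> (forall i, D i i = 0) -> \tr (A *m D) = 0.
Proof.
case/diag_mxP=> d -> D0; rewrite mul_diag_mx /mxtrace big1 // => i _.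
by rewrite mxE D0 mulr0.
Qed.

Section HermitianCongruence.
Variables (F : fieldType) (sigma : {rmorphism F -> F}).
Hypothesis sigmaK : involutive sigma.

Lemma maptK m n (A : 'M[F]_(m, n)) : A ^t sigma ^t sigma = A.
Proof. by rewrite map_trmx trmxK -map_mx_comp eq_map_mx_id. Qed.

Lemma maptM m n p (A : 'M[F]_(m, n)) (B : 'M[F]_(n, p)) :
  (A *m B) ^t sigma = B ^t sigma *m A ^t sigma.
Proof. by rewrite trmx_mul map_mxM. Qed.

Lemma maptN m n (A : 'M[F]_(m, n)) : (- A) ^t sigma = - (A ^t sigma).
Proof. by rewrite linearN map_mxN. Qed.

Lemma maptB m n (A B : 'M[F]_(m, n)) : (A - B) ^t sigma = A ^t sigma - B ^t sigma.
Proof. by rewrite linearB map_mxB. Qed.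

Lemma maptD m n (A B : 'M[F]_(m, n)) : (A + B) ^t sigma = A ^t sigma + B ^t sigma.
Proof. by rewrite linearD map_mxD. Qed.

Lemma maptZ m n a (A : 'M[F]_(m, n)) : (a *: A) ^t sigma = sigma a *: A ^t sigma.
Proof. by rewrite linearZ map_mxZ. Qed.

Lemma mapt_delta m n i j : (delta_mx i j : 'M[F]_(m, n)) ^t sigma = delta_mx j i.
Proof. by rewrite trmx_delta map_delta_mx. Qed.

Lemma mapt1 n : (1%:M : 'M[F]_n) ^t sigma = 1%:M.
Proof. by rewrite trmx1 map_mx1. Qed.

Lemma mapt_block m1 m2 n1 n2 (Aul : 'M[F]_(m1, n1)) (Aur : 'M[F]_(m1, n2))
    (Adl : 'M[F]_(m2, n1)) (Adr : 'M[F]_(m2, n2)) :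
  (block_mx Aul Aur Adl Adr) ^t sigma =
  block_mx (Aul ^t sigma) (Adl ^t sigma) (Aur ^t sigma) (Adr ^t sigma).
Proof. by rewrite tr_block_mx map_block_mx. Qed.

Lemma unitmx_mapt n (A : 'M[F]_n) : (A ^t sigma \in unitmx) = (A \in unitmx).
Proof. by rewrite map_unitmx unitmx_tr. Qed.

Lemma hermP n (Z : 'M[F]_n) : reflect (Z ^t sigma = Z) (Z \is (false, sigma).-sesqui).
Proof. by rewrite sesquiE expr0 scale1r eq_sym; apply: eqP. Qed.

Lemma herm_congr m n (Q : 'M[F]_(m, n)) (Z : 'M[F]_n) :
  Z \is (false, sigma).-sesqui -> Q *m Z *m Q ^t sigma \is (false, sigma).-sesqui.
Proof. by move/hermP=> Zh; apply/hermP; rewrite !maptM maptK Zh mulmxA. Qed.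

Lemma mxrank_mul_unit m n (Q : 'M[F]_m) (Z : 'M[F]_(m, n)) (P : 'M[F]_n) :
  Q \in unitmx -> P \in unitmx -> \rank (Q *m Z *m P) = \rank Z.
Proof. by move=> Qu Pu; rewrite mxrankMfree ?row_free_unit // eqmxMfull ?row_full_unit. Qed.

Lemma congr_mxE m n (Q : 'M[F]_(m, n)) (Z : 'M[F]_n) k l :
  (Q *m Z *m Q ^t sigma) k l = form sigma Z (row k Q) (row l Q).
Proof.
rewrite /form -row_mul !mxE; apply: eq_bigr => j _.
by rewrite !mxE.
Qed.

Lemma herm_form_fixed n (Z : 'M[F]_n) u :
  Z \is (false, sigma).-sesqui -> sigma (form sigma Z u u) = form sigma Z u u.
Proof. by move=> Zh; rewrite [RHS](formC sigmaK Zh) expr0 mul1r. Qed.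

Lemma congr_mxK n (Q : 'M[F]_n) : Q \in unitmx ->
  cancel (fun A => Q *m A *m Q ^t sigma) (fun A => invmx Q *m A *m invmx Q ^t sigma).
Proof.
move=> Qu A; rewrite !mulmxA mulVmx // mul1mx -mulmxA -maptM mulVmx //.
by rewrite mapt1 mulmx1.
Qed.

Lemma herm_congrE n (Q A : 'M[F]_n) : Q \in unitmx ->
  (Q *m A *m Q ^t sigma \is (false, sigma).-sesqui) = (A \is (false, sigma).-sesqui).
Proof.
move=> Qu; apply/idP/idP => [|/(herm_congr Q)//].
by move/(herm_congr (invmx Q)); rewrite congr_mxK.
Qed.

Lemma herm_trace_fixed n (A B : 'M[F]_n) :
  A \is (false, sigma).-sesqui -> B \is (false, sigma).-sesqui ->
  sigma (\tr (A *m B)) = \tr (A *m B).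
Proof.
move=> /hermP Ah /hermP Bh.
by rewrite -trace_map_mx -mxtrace_tr map_trmx maptM Ah Bh mxtrace_mulC.
Qed.

Lemma congr_mxM m n p (A : 'M[F]_(m, n)) (B : 'M[F]_(n, p)) (Z : 'M[F]_p) :
  (A *m B) *m Z *m (A *m B) ^t sigma = A *m (B *m Z *m B ^t sigma) *m A ^t sigma.
Proof. by rewrite maptM !mulmxA. Qed.

Section Pivot.
Hypothesis sigma_neq_id : exists a, sigma a != a.
Hypothesis norm_onto : forall a, sigma a = a -> exists s, s * sigma s = a.

Lemma exists_trace_neq0 : exists y, y + sigma y != 0.
Proof.
have [two_neq0|/negbNE/eqP two_eq0] := boolP (2%:R != 0 :> F).
  by exists 1; rewrite rmorph1.
(* In characteristic 2 the trace of a is a - sigma a. *)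
have [a sa_neq_a] := sigma_neq_id; exists a.
have -> : sigma a = - sigma a.
  by apply/eqP; rewrite -subr_eq0 opprK -mulr2n -mulr_natr two_eq0 mulr0.
by rewrite subr_eq0 eq_sym.
Qed.

Lemma herm_congr_diag_neq0 n (Z : 'M[F]_n) :
  Z \is (false, sigma).-sesqui -> Z != 0 ->
  exists Q i, Q \in unitmx /\ (Q *m Z *m Q ^t sigma) i i != 0.
Proof.
move=> Zh Z_neq0.
have [i Zii|Zdiag] := pickP (fun i => Z i i != 0).
  by exists 1%:M, i; rewrite mapt1 mul1mx mulmx1 unitmx1.
have Zkk k : Z k k = 0 by apply/eqP/negbFE/Zdiag.
have [[i j] /= Zij|Z0] := pickP (fun ij : 'I_n * 'I_n => Z ij.1 ij.2 != 0); last first.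
  by case/eqP: Z_neq0; apply/matrixP => i j; rewrite mxE; apply/eqP/negbFE/(Z0 (i, j)).
have ij : i != j by apply: contraNneq Zij => ->; rewrite Zkk.
(* The form value of e_i + c e_j is then c^sigma Z i j + its conjugate = y + sigma y. *)
have [y Ty] := exists_trace_neq0.
pose c := sigma (y / Z i j).
exists (1%:M + c *: delta_mx i j), i; split.
  have : (1%:M + c *: delta_mx i j) *m (1%:M - c *: delta_mx i j) = 1%:M.
    rewrite mulmxDl !mulmxBr !mul1mx mulmx1 -!scalemxAl -!scalemxAr.
    by rewrite mul_delta_mx_cond eq_sym (negbTE ij) mulr0n !scaler0 subr0 subrK.
  by case/mulmx1_unit.
rewrite congr_mxE.
have -> : row i (1%:M + c *: delta_mx i j) = 'e_i + c *: 'e_j.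
  by rewrite rowE mulmxDr -scalemxAr mul_delta_mx -rowE row1.
by rewrite (formD sigmaK Zh) formZ !formee !Zkk mulr0 addr0 add0r formZr formee sigmaK
  mulfVK // expr0 mul1r.
Qed.

Lemma herm_congr_pivot n (Z : 'M[F]_n.+1) i :
  Z \is (false, sigma).-sesqui -> Z i i != 0 ->
  exists2 Q, Q \in unitmx & (Q *m Z *m Q ^t sigma) 0 0 = 1.
Proof.
move=> Zh Zii.
have Zii_fixed : sigma (Z i i)^-1 = (Z i i)^-1 by rewrite fmorphV -(formee sigma) herm_form_fixed.
have [s ss] := norm_onto Zii_fixed.
have s_neq0 : s != 0 by apply: contra_eq_neq ss => ->; rewrite mul0r eq_sym invr_eq0.
exists (s *: perm_mx (tperm 0 i)); first by rewrite unitmxZ ?unitfE // unitmx_perm.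
rewrite congr_mxE.
have -> : row 0 (s *: perm_mx (tperm 0 i)) = s *: 'e_i.
  by apply/rowP => j; rewrite !mxE tpermL eqxx eq_sym.
by rewrite formZ formee ss mulVf.
Qed.

Lemma herm_block_reduce n (W : 'M[F]_(1 + n)) :
  W \is (false, sigma).-sesqui -> W 0 0 = 1 ->
  exists E (X : 'M[F]_n), [/\ E \in unitmx, X \is (false, sigma).-sesqui
    & E *m W *m E ^t sigma = block_mx 1%:M 0 0 X].
Proof.
(* Clear the first row and column; what remains is the Schur complement of W 0 0. *)
move=> /hermP Wh W00; pose b := ursubmx W; pose X := drsubmx W.
have ulW : ulsubmx W = 1%:M.
  by apply/matrixP => i j; rewrite !ord1 !mxE -W00; congr (W _ _); apply: val_inj.
have [dlW Xh] : dlsubmx W = b ^t sigma /\ X ^t sigma = X.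
  have := Wh; rewrite -[W in LHS]submxK mapt_block -[W in RHS]submxK.
  by case/eq_block_mx => _ _ <- ->.
exists (block_mx 1%:M 0 (- (b ^t sigma)) 1%:M), (X - b ^t sigma *m b); split.
- by rewrite unitmx_lblock !unitmx1.
- by apply/hermP; rewrite maptB maptM maptK Xh.
rewrite -[W]submxK ulW dlW -/b -/X mapt_block !mapt1 trmx0 map_mx0 maptN maptK.
by rewrite !mulmx_block !(mul1mx, mul0mx, mulmx0, mulmx1, addr0, add0r, addNr) mulNmx addrC.
Qed.

Lemma herm_congr_pid n (Z : 'M[F]_n) : Z \is (false, sigma).-sesqui ->
  exists2 Q, Q \in unitmx & Q *m Z *m Q ^t sigma = pid_mx (\rank Z).
Proof.
move=> Zh; suff [r [Q [r_le Qu ZQ]]] : exists r (Q : 'M_n),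
    [/\ (r <= n)%N, Q \in unitmx & Q *m Z *m Q ^t sigma = pid_mx r].
  have Qtu : Q ^t sigma \in unitmx by rewrite unitmx_mapt.
  by exists Q; rewrite // -(mxrank_mul_unit Z Qu Qtu) ZQ rank_pid_mx.
elim: n Z Zh => [|n IH] Z Zh.
  by exists 0%N, 1%:M; rewrite unitmx1 !thinmx0.
have [->|Z_neq0] := eqVneq Z 0.
  by exists 0%N, 1%:M; rewrite unitmx1 mulmx0 mul0mx pid_mx_0.
have [Q1 [i [Q1u Zi]]] := herm_congr_diag_neq0 Zh Z_neq0.
have [Q2 Q2u W00] := herm_congr_pivot (herm_congr Q1 Zh) Zi.
have [E [X [Eu Xh EW]]] := herm_block_reduce (herm_congr Q2 (herm_congr Q1 Zh)) W00.
have [r [Q [r_le Qu XQ]]] := IH X Xh.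
(* The explicit sizes let the block lemmas, stated for 'M_(1 + n), match 'M_n.+1. *)
exists r.+1, (block_mx 1%:M 0 0 Q *m E *m Q2 *m Q1); split => //.
  by rewrite !unitmx_mul (@unitmx_lblock _ 1 n) unitmx1 Qu Eu Q2u Q1u.
rewrite !congr_mxM EW (@mapt_block 1 n 1 n) mapt1 !trmx0 !map_mx0.
rewrite !(@mulmx_block _ 1 n 1 n 1 n).
by rewrite !(mul1mx, mul0mx, mulmx0, mulmx1, addr0, add0r) XQ (@pid_mxS _ n n).
Qed.

End Pivot.

End HermitianCongruence.

Lemma dual_inner_distE (F : finFieldType) q (chi : F -> algC) n (C : {set 'M[F]_n}) k :
  dual_inner_dist q chi C k =
  (\sum_(XY in setX C C) Qk q chi n k (\rank (XY.1 - XY.2))) / #|C|%:R.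
Proof.
rewrite /dual_inner_dist /inner_dist.
under eq_bigr do rewrite mulrA.
rewrite -mulr_suml; congr (_ / _).
rewrite (partition_big (fun XY => inord (\rank (XY.1 - XY.2)) : 'I_n.+1) xpredT) //=.
apply: eq_bigr => i _; rewrite mulr_natr -sumr_const.
apply: eq_big => [XY|XY]; rewrite inE.
  by rewrite -val_eqE /= inordK // ltnS rank_leq_col.
by case/andP=> _ /eqP <-.
Qed.

Section ZeroDiagonalHermitianCode.
Variables (F : finFieldType) (q : nat) (qF : [pchar F].-nat q).
Hypothesis cardF : #|F| = (q ^ 2)%N.
Variable chi : F -> algC.
Hypothesis chi0 : chi 0 = 1.
Hypothesis chiD :
  forall a b : F, a ^+ q = a -> b ^+ q = b -> chi (a + b) = chi a * chi b.
Hypothesis chi_nontrivial : exists a : F, a ^+ q = a /\ chi a != 1.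

Local Notation sigma := (pFrobenius_pow qF : {rmorphism F -> F}).
Local Notation M n := (zero_diag_herm q F n).

Let sigmaK : involutive sigma := sqrt_card_powK cardF.
Let sigma_neq_id : exists a, sigma a != a := sqrt_card_pow_neq_id cardF.
Let norm_onto : forall a, sigma a = a -> exists s, s * sigma s = a :=
  sqrt_card_norm_onto cardF.

Lemma mxstar_mapt n (A : 'M[F]_n) : mxstar q A = A ^t sigma.
Proof. by rewrite /mxstar map_trmx. Qed.

Lemma hermitian_sesqui n (A : 'M[F]_n) :
  Defs.hermitian q A = (A \is (false, sigma).-sesqui).
Proof. by rewrite /Defs.hermitian mxstar_mapt; apply/eqP/hermP. Qed.

Lemma mem_herm_rank n k (A : 'M[F]_n) :
  (A \in herm_rank q F n k) = (A \is (false, sigma).-sesqui) && (\rank A == k).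
Proof. by rewrite inE hermitian_sesqui. Qed.

Lemma mem_zero_diag_herm n (A : 'M[F]_n) :
  (A \in M n) = (A \is (false, sigma).-sesqui) && [forall i, A i i == 0].
Proof. by rewrite inE hermitian_sesqui. Qed.

Lemma zero_diag_herm_zmod_closed n : zmod_closed (M n).
Proof.
split=> [|X Y]; rewrite !mem_zero_diag_herm.
  by apply/andP; split; [apply/hermP; rewrite trmx0 map_mx0 | apply/forallP => i; rewrite mxE].
move=> /andP[/hermP Xh /forallP X0] /andP[/hermP Yh /forallP Y0].
apply/andP; split; first by apply/hermP; rewrite maptB Xh Yh.
by apply/forallP => i; rewrite !mxE (eqP (X0 i)) (eqP (Y0 i)) subr0.
Qed.

Lemma sum_herm_rank_pairing n k (Z : 'M[F]_n) : Z \is (false, sigma).-sesqui ->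
  \sum_(A in herm_rank q F n k) pairing q chi A Z = Qk q chi n k (\rank Z).
Proof.
move=> Zh; have [Q Qu ZQ] := herm_congr_pid sigmaK sigma_neq_id norm_onto Zh.
pose P := Q ^t sigma; have Pu : P \in unitmx by rewrite unitmx_mapt.
rewrite /Qk -ZQ (reindex (fun A => P *m A *m P ^t sigma)) /=; last first.
  exists (fun A => invmx P *m A *m invmx P ^t sigma) => A _; first exact: congr_mxK.
  have Piu : invmx P \in unitmx by rewrite unitmx_inv.
  by have := @congr_mxK _ sigma _ _ Piu A; rewrite invmxK.
apply: eq_big => [A|A _]; first by rewrite !mem_herm_rank herm_congrE ?mxrank_mul_unit ?unitmx_mapt.
by rewrite /pairing !mxstar_mapt !maptM maptK // /P maptK // -!mulmxA mxtrace_mulC !mulmxA.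
Qed.

Lemma chi_trace_neq1 : exists y, chi (y + sigma y) != 1.
Proof.
have [a [a_fixed chi_a]] := chi_nontrivial.
have [y0 Ty0] := exists_trace_neq0 sigma_neq_id.
set b := y0 + sigma y0 in Ty0.
have b_fixed : sigma b = b by rewrite rmorphD sigmaK addrC.
have a_fixed' : sigma a = a := a_fixed.
by exists (a / b * y0); rewrite rmorphM fmorph_div b_fixed a_fixed' -mulrDr mulfVK.
Qed.

Lemma pairing_morph n (A : 'M[F]_n) : A \is (false, sigma).-sesqui ->
  {in M n &, {morph pairing q chi A : X Y / X + Y >-> X * Y}}.
Proof.
move=> Ah X Y; rewrite !mem_zero_diag_herm => /andP[Xh _] /andP[Yh _].
have /hermP AhE := Ah.
rewrite /pairing !mxstar_mapt AhE mulmxDr mxtraceD chiD //.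
all: exact: (@herm_trace_fixed _ sigma).
Qed.

Lemma sum_zero_diag_herm_pairing n (A : 'M[F]_n) : A \is (false, sigma).-sesqui ->
  \sum_(D in M n) pairing q chi A D = if is_diag_mx A then #|M n|%:R else 0.
Proof.
move=> Ah; have /hermP AhE := Ah.
have [[i j] /andP[/= ij Aij]|Adiag] :=
  pickP (fun ij : 'I_n * 'I_n => (ij.1 != ij.2) && (A ij.1 ij.2 != 0)).
  have -> : is_diag_mx A = false.
    by apply: contraNF Aij => /is_diag_mxP/(_ i j ij)->.
  (* X lies in M and \tr (A *m X) = y + sigma y, so the character sum vanishes. *)
  have [y Ty] := chi_trace_neq1.
  pose c := y / A i j; pose X := c *: delta_mx j i + sigma c *: delta_mx i j.
  apply: (sum_mulmorph_eq0 (zero_diag_herm_zmod_closed n) (pairing_morph Ah) (y := X)).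
    rewrite mem_zero_diag_herm; apply/andP; split.
      by apply/hermP; rewrite maptD !maptZ !mapt_delta sigmaK addrC.
    apply/forallP => k; rewrite !mxE [(k == i) && _]andbC.
    have -> : (k == j) && (k == i) = false.
      by apply/andP => -[/eqP kj /eqP ki]; move: ij; rewrite -ki kj eqxx.
    by rewrite !mulr0 add0r.
  rewrite /pairing mxstar_mapt AhE mulmxDr mxtraceD -!scalemxAr !mxtraceZ !mxtrace_mul_delta.
  have -> : A j i = sigma (A i j) by rewrite -[in LHS]AhE !mxE.
  by rewrite -rmorphM mulfVK.
have A_diag : is_diag_mx A.
  by apply/is_diag_mxP => i j ij; have /negbT := Adiag (i, j); rewrite /= ij negbK => /eqP.
rewrite A_diag -sumr_const; apply: eq_bigr => D.
rewrite mem_zero_diag_herm => /andP[_ /forallP D0].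
by rewrite /pairing mxstar_mapt AhE (mxtrace_mul_diag A_diag) // => k; apply/eqP.
Qed.

Lemma dual_inner_dist_zero_diag_herm n k :
  dual_inner_dist q chi (M n) k =
  (#|M n| * #|[set A in herm_rank q F n k | is_diag_mx A]|)%:R.
Proof.
have [M0 Msub] := zero_diag_herm_zmod_closed n.
have M_gt0 : (0 < #|M n|)%N by apply/card_gt0P; exists 0.
rewrite dual_inner_distE.
have -> : \sum_(XY in setX (M n) (M n)) Qk q chi n k (\rank (XY.1 - XY.2)) =
    \sum_(XY in setX (M n) (M n)) \sum_(A in herm_rank q F n k) pairing q chi A (XY.1 - XY.2).
  apply: eq_bigr => -[X Y] /setXP[MX MY] /=.
  have := Msub X Y MX MY; rewrite mem_zero_diag_herm => /andP[XYh _].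
  by rewrite sum_herm_rank_pairing.
rewrite exchange_big /=.
rewrite (eq_bigr (fun A => (if is_diag_mx A then #|M n|%:R else 0) *+ #|M n|)); last first.
  move=> A; rewrite mem_herm_rank => /andP[Ah _].
  by rewrite sum_setX_subr ?zero_diag_herm_zmod_closed // sum_zero_diag_herm_pairing.
rewrite sumrMnl -big_mkcondr /= (eq_bigl (mem [set A in herm_rank q F n k | is_diag_mx A])).
  by rewrite sumr_const -!mulrnA mulnA [in LHS]natrM mulfK // pnatr_eq0 -lt0n.
by move=> A; rewrite !inE.
Qed.

Lemma dual_inner_dist_zero_diag_herm_neq0 n k : (k <= n)%N ->
  dual_inner_dist q chi (M n) k != 0.
Proof.
move=> k_le_n; rewrite dual_inner_dist_zero_diag_herm pnatr_eq0 muln_eq0 negb_or -!lt0n.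
apply/andP; split; apply/card_gt0P; first by exists 0; have [] := zero_diag_herm_zmod_closed n.
exists (pid_mx k); rewrite inE mem_herm_rank rank_pid_mx // eqxx andbT; apply/andP; split.
  by apply/hermP; rewrite tr_pid_mx map_pid_mx.
by apply/is_diag_mxP => i j ij; rewrite mxE (negbTE ij).
Qed.

End ZeroDiagonalHermitianCode.

Theorem theorem5p5 (q : nat) (F : finFieldType) (n : nat) (chi : F -> algC) :
  (exists p e : nat, [/\ prime p, (0 < e)%N & q = (p ^ e)%N]) ->
  #|F| = (q ^ 2)%N ->
  (2 <= n)%N ->
  nontrivial_additive_char q chi ->
  forall t : nat, (1 <= t <= n)%N ->
  ~ is_design q chi (zero_diag_herm q F n) t.
Proof.
move=> [p [e [p_prime _ q_def]]] cardF n_ge2 [chi0 chiD chi_nontrivial] t.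
case/andP=> t_ge1 _ design.
have pF : p \in [pchar F].
  by apply: (card_finPcharP (n := (e * 2)%N)); rewrite // expnM -q_def.
have qF : [pchar F].-nat q by rewrite q_def pnatX (pnatE _ p_prime) pF.
have := dual_inner_dist_zero_diag_herm_neq0 qF cardF chi0 chiD chi_nontrivial (ltnW n_ge2).
by rewrite design ?eqxx.
Qed.
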